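(* Let $f_1,\dots,f_n\in\mathbb{Z}[x_1,\dots,x_n,y_1,\dots,y_n,z_1,\dots,z_r]$ and for $\overline{z}\in\mathbb{C}^r$ let $F_{\overline{z}}:\mathbb{C}^n\times\mathbb{C}^n\to\mathbb{C}^n$ be the map $(\overline{x},\overline{y})\mapsto(f_1,\dots,f_n)(\overline{x},\overline{y},\overline{z})$. The set of $\overline{z}\in\mathbb{C}^r$ such that $F_{\overline{z}}$ has a balanced zero is an open subset of $\mathbb{C}^r$. Likewise, the set of $\overline{z}\in\mathbb{C}^r$ such that $F_{\overline{z}}$ has a well balanced zero is an open subset of $\mathbb{C}^r$.
   Context: A zero $(\overline{a},\overline{b})$ of a polynomial map $G:\mathbb{C}^n\times\mathbb{C}^n\to\mathbb{C}^n$ is a balanced zero if (1) $a_1,\dots,a_n$ are nonzero and pairwise distinct, and (2) there is a partition $I\sqcup J=\{1,\dots,n\}$ such that the $n\times n$ Jacobian matrix of $G$ with respect to the variables $(x_i)_{i\in I}$ and $(y_j)_{j\in J}$ is nonsingular at $(\overline{a},\overline{b})$. It is a well balanced zero if moreover (3) the tangent space $(\overline{a},\overline{b})+\ker DG(\overline{a},\overline{b})$ is not contained in any hyperplane $\{x_i=c\}$ with $i\in\{1,\dots,n\}$, $c\in\mathbb{C}$. *)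

From HB Require Import structures.
From mathcomp Require Import all_boot all_order all_algebra.
From mathcomp Require Import complex.
From mathcomp Require Import Rstruct.
From mathcomp Require Import mpoly.
From Stdlib Require Rdefinitions.

Set Implicit Arguments.
Unset Strict Implicit.
Unset Printing Implicit Defensive.
Import Order.TTheory GRing.Theory Num.Theory.
Local Open Scope ring_scope.

Definition C : Type := (Rdefinitions.R)[i].

(* Variables of Z[x_1..x_n, y_1..y_n, z_1..z_r] are indexed by 'I_(n+n+r):
   x_i = lshift r (lshift n i), y_j = lshift r (rshift n j), z_l = rshift (n+n) l. *)
Definition xvar (n r : nat) (i : 'I_n) : 'I_(n + n + r) := lshift r (lshift n i).
Definition yvar (n r : nat) (j : 'I_n) : 'I_(n + n + r) := lshift r (rshift n j).

Definition pt (n r : nat) (a b : 'I_n -> C) (z : 'I_r -> C) : 'I_(n + n + r) -> C :=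
  fun k => match split k with
           | inl k1 => match split k1 with inl i => a i | inr j => b j end
           | inr l => z l
           end.

Definition evalC (N : nat) (p : {mpoly int[N]}) (v : 'I_N -> C) : C :=
  meval v (map_mpoly (fun c : int => c%:~R : C) p).

Definition dpoly (N : nat) (p : {mpoly int[N]}) (k : 'I_N) (v : 'I_N -> C) : C :=
  evalC (mderiv k p) v.

(* The partition
   I ⊔ J of {1..n} is encoded by I : {set 'I_n}, J its complement; column j of
   the Jacobian is the derivative w.r.t. x_j if j ∈ I and w.r.t. y_j if j ∈ J. *)
Definition balanced_zero (n r : nat) (f : 'I_n -> {mpoly int[n + n + r]})
    (z : 'I_r -> C) (a b : 'I_n -> C) : Prop :=
  [/\ (forall k, evalC (f k) (pt a b z) = 0),
      (forall i, a i != 0),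
      (forall i j, a i = a j -> i = j) &
      exists I : {set 'I_n},
        (\matrix_(k < n, j < n)
            dpoly (f k) (if j \in I then xvar r j else yvar r j) (pt a b z))
          \in unitmx].

(* Kernel of DF_z(a,b) (the n x 2n Jacobian w.r.t. (x,y)); vectors of C^(2n)
   are indexed by 'I_(n+n), index lshift n i <-> x_i, rshift n j <-> y_j. *)
Definition in_ker_DG (n r : nat) (f : 'I_n -> {mpoly int[n + n + r]})
    (z : 'I_r -> C) (a b : 'I_n -> C) (v : 'I_(n + n) -> C) : Prop :=
  forall k : 'I_n,
    \sum_(w < n + n) dpoly (f k) (lshift r w) (pt a b z) * v w = 0.

Definition well_balanced_zero (n r : nat) (f : 'I_n -> {mpoly int[n + n + r]})
    (z : 'I_r -> C) (a b : 'I_n -> C) : Prop :=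
  balanced_zero f z a b /\
  ~ (exists (i : 'I_n) (c : C),
       forall v : 'I_(n + n) -> C, in_ker_DG f z a b v ->
         a i + v (lshift n i) = c).

(* Openness in C^r for the standard (product / sup-norm) topology. *)
Definition open_Cr (r : nat) (S : ('I_r -> C) -> Prop) : Prop :=
  forall z, S z -> exists e : Rdefinitions.R, 0 < e /\
    forall z' : 'I_r -> C, (forall l, `|z' l - z l| < (e%:C)%C) -> S z'.

(* If (a, b) is a balanced zero of F_z for the partition I ⊔ J, the
   map u = (x_I, y_J) |-> F_z(x, y), the other coordinates being frozen at (a, b), is a square
   polynomial system whose Jacobian is invertible at u = (a_I, b_J). Polynomials are strictly
   differentiable, so a Newton map is a contraction on a small ball of C^n = R^2n, and Banach's
   fixed point theorem gives, for every z' close to z, a zero (a', b') of F_z' arbitrarily close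
   to (a, b). Then the a'_i stay nonzero and pairwise distinct and the Jacobian stays
   invertible: (a', b') is balanced.
   Condition (3) fails exactly when for some i every v in ker DF has v_(x_i) = 0 (v = 0 forces
   c = a_i). With D = DF, S the selection of the columns of I ⊔ J and J = D S, the polynomial
   matrix K = det J * 1 - S adj(J) D satisfies D K = 0 identically and K v = det J * v when
   D v = 0. So a kernel vector with v_(x_i) <> 0 at (a, b, z) yields, by continuity, kernel
   vectors K v with nonzero x_i-component at all nearby points, and well balanced zeros
   persist as well. *)

From HB Require Import structures.
From mathcomp Require Import all_boot all_order all_algebra.
From mathcomp Require Import complex Rstruct mpoly ring lra.
From mathcomp Require Import classical_sets boolp functions topology normedtype sequences.
From mathcomp Require Import reals Rstruct_topology interval_inference.
Import Order.TTheory GRing.Theory Num.Theory Normc.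

Set Implicit Arguments.
Unset Strict Implicit.
Unset Printing Implicit Defensive.

Local Open Scope ring_scope.
Local Notation R := Rdefinitions.R.

Lemma normc_ge0 (x : C) : 0 <= normc x.
Proof. by case: x => a b; exact: sqrtr_ge0. Qed.

Lemma normc_gt0 (x : C) : (0 < normc x) = (x != 0).
Proof.
rewrite lt_def normc_ge0 andbT; congr negb.
by apply/eqP/eqP => [/eq0_normc|->]; rewrite ?normc0.
Qed.

Lemma normc_distC (x y : C) : normc (x - y) = normc (y - x).
Proof. by rewrite -normcN opprB. Qed.

Lemma normc_sum (I : Type) (s : seq I) (P : pred I) (F : I -> C) :
  normc (\sum_(i <- s | P i) F i) <= \sum_(i <- s | P i) normc (F i).
Proof.
elim/big_rec2: _ => [|i y1 y2 _ h]; first by rewrite normc0.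
by apply: le_trans (le_normcD _ _) _; rewrite lerD2l.
Qed.

Lemma ltc_normc (x : C) (e : R) : (`|x| < e%:C)%C = (normc x < e).
Proof. by case: x => a b; rewrite normc_def ltcR. Qed.

Lemma normc_Re (x : C) : `|complex.Re x| <= normc x.
Proof.
by case: x => a b; rewrite /= -sqrtr_sqr ler_sqrt ?addr_ge0 ?sqr_ge0 // lerDl sqr_ge0.
Qed.

Lemma normc_Im (x : C) : `|complex.Im x| <= normc x.
Proof.
by case: x => a b; rewrite /= -sqrtr_sqr ler_sqrt ?addr_ge0 ?sqr_ge0 // lerDr sqr_ge0.
Qed.

Lemma normc_complex_le (a b : R) : normc (a +i* b)%C <= `|a| + `|b|.
Proof.
have -> : `|a| + `|b| = Num.sqrt ((`|a| + `|b|) ^+ 2).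
  by rewrite sqrtr_sqr (ger0_norm (addr_ge0 (normr_ge0 a) (normr_ge0 b))).
rewrite /normc ler_sqrt ?sqr_ge0 // sqrrD !real_normK ?num_real //.
by rewrite -addrA lerD2l lerDr mulrn_wge0 ?mulr_ge0.
Qed.

Lemma exists_pos_mul_le (A e : R) : 0 <= A -> 0 < e -> exists2 t : R, 0 < t & t * A <= e.
Proof.
move=> A0 e0; exists (e / (A + 1)); first by rewrite divr_gt0 // ltr_wpDl.
rewrite mulrAC ler_pdivrMr ?ltr_wpDl // ler_pM2l //; lra.
Qed.

(** * Local analysis on C^N *)

Section LocalAnalysis.
Variable N : nat.
Implicit Types (c w v L : 'I_N -> C) (g h : ('I_N -> C) -> C).

Definition cball c (d : R) w := forall k, normc (w k - c k) <= d.

Definition near c (P : ('I_N -> C) -> Prop) :=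
  exists2 d : R, 0 < d & forall w, cball c d w -> P w.

Definition near2 c (P : ('I_N -> C) -> ('I_N -> C) -> Prop) :=
  exists2 d : R, 0 < d & forall w w', cball c d w -> cball c d w' -> P w w'.

Lemma cball_le c d d' w : d <= d' -> cball c d w -> cball c d' w.
Proof. by move=> dd' h k; apply: le_trans (h k) dd'. Qed.

Lemma cball_center c d : 0 <= d -> cball c d c.
Proof. by move=> d0 k; rewrite subrr normc0. Qed.

Lemma near_cball c d : 0 < d -> near c (cball c d).
Proof. by move=> d0; exists d. Qed.

Lemma near_mono c (P Q : ('I_N -> C) -> Prop) :
  near c P -> (forall w, P w -> Q w) -> near c Q.
Proof. by move=> [d d0 hP] PQ; exists d => // w /hP /PQ. Qed.

Lemma nearI c P Q : near c P -> near c Q -> near c (fun w => P w /\ Q w).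
Proof.
move=> [d1 d10 hP] [d2 d20 hQ]; exists (Num.min d1 d2); first by rewrite lt_min d10.
by move=> w hw; split; [apply: hP | apply: hQ]; apply: cball_le hw; rewrite ge_min lexx ?orbT.
Qed.

Lemma near_forall (T : finType) c (P : T -> ('I_N -> C) -> Prop) :
  (forall t, near c (P t)) -> near c (fun w => forall t, P t w).
Proof.
move=> hP; suff : near c (fun w => forall t, t \in enum T -> P t w).
  by move/near_mono; apply => w h t; apply: h; rewrite mem_enum.
elim: (enum T) => [|t s ih]; first by exists 1.
apply: (near_mono (nearI (hP t) ih)) => w [Pt Ps] t'.
by rewrite in_cons => /predU1P[->|/Ps].
Qed.

Lemma near2_mono c (P Q : ('I_N -> C) -> ('I_N -> C) -> Prop) :
  near2 c P -> (forall w w', P w w' -> Q w w') -> near2 c Q.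
Proof. by move=> [d d0 hP] PQ; exists d => // w w' hw hw'; apply/PQ/hP. Qed.

Lemma near2I c P Q : near2 c P -> near2 c Q -> near2 c (fun w w' => P w w' /\ Q w w').
Proof.
move=> [d1 d10 hP] [d2 d20 hQ]; exists (Num.min d1 d2); first by rewrite lt_min d10.
have [le1 le2] : Num.min d1 d2 <= d1 /\ Num.min d1 d2 <= d2 by rewrite !ge_min !lexx ?orbT.
by move=> w w' hw hw'; split; [apply: hP | apply: hQ]; apply: cball_le; eauto.
Qed.

Lemma near2_forall (T : finType) c (P : T -> ('I_N -> C) -> ('I_N -> C) -> Prop) :
  (forall t, near2 c (P t)) -> near2 c (fun w w' => forall t, P t w w').
Proof.
move=> hP; suff : near2 c (fun w w' => forall t, t \in enum T -> P t w w').
  by move/near2_mono; apply => w w' h t; apply: h; rewrite mem_enum.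
elim: (enum T) => [|t s ih]; first by exists 1.
apply: (near2_mono (near2I (hP t) ih)) => w w' [Pt Ps] t'.
by rewrite in_cons => /predU1P[->|/Ps].
Qed.

Lemma near2_near c P : near c P -> near2 c (fun w w' => P w /\ P w').
Proof. by move=> [d d0 hP]; exists d => // w w' /hP ? /hP. Qed.

Definition norm1 v : R := \sum_k normc (v k).

Definition dotv L v : C := \sum_k L k * v k.

Lemma norm1_ge0 v : 0 <= norm1 v.
Proof. by apply: sumr_ge0 => k _; exact: normc_ge0. Qed.

Lemma normc_le_norm1 v k : normc (v k) <= norm1 v.
Proof.
by rewrite /norm1 (bigD1 k) //= lerDl; apply: sumr_ge0 => j _; exact: normc_ge0.
Qed.

Lemma norm1_le v (t : R) : (forall k, normc (v k) <= t) -> norm1 v <= N%:R * t.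
Proof.
move=> h; apply: le_trans (ler_sum _ (fun k _ => h k)) _.
by rewrite sumr_const card_ord mulr_natl.
Qed.

Lemma normc_dotv L v : normc (dotv L v) <= norm1 L * norm1 v.
Proof.
apply: le_trans (normc_sum _ _ _) _; rewrite /norm1 mulr_suml.
by apply: ler_sum => k _; rewrite normcM ler_wpM2l ?normc_ge0 ?normc_le_norm1.
Qed.

Lemma dotvDl L L' v : dotv (fun k => L k + L' k) v = dotv L v + dotv L' v.
Proof. by rewrite /dotv -big_split; apply: eq_bigr => k _; rewrite mulrDl. Qed.

Lemma dotvZl (a : C) L v : dotv (fun k => a * L k) v = a * dotv L v.
Proof. by rewrite /dotv mulr_sumr; apply: eq_bigr => k _; rewrite mulrA. Qed.

Lemma dotvZr (a : C) L v : dotv (fun k => L k * a) v = a * dotv L v.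
Proof. by rewrite /dotv mulr_sumr; apply: eq_bigr => k _; rewrite mulrCA mulrA. Qed.

Lemma dotvBr L v v' : dotv L (fun k => v k - v' k) = dotv L v - dotv L v'.
Proof. by rewrite /dotv -sumrB; apply: eq_bigr => k _; rewrite mulrBr. Qed.

Definition cont_at g c :=
  forall e : R, 0 < e -> near c (fun w => normc (g w - g c) <= e).

Lemma cont_at_cst (a : C) c : cont_at (fun _ => a) c.
Proof. by move=> e e0; exists 1 => // w _; rewrite subrr normc0 ltW. Qed.

Lemma cont_at_coord k c : cont_at (fun w => w k) c.
Proof. by move=> e e0; exists e. Qed.

Lemma cont_atD g h c : cont_at g c -> cont_at h c -> cont_at (fun w => g w + h w) c.
Proof.
move=> cg ch e e0; have e2 : 0 < e / 2 by rewrite divr_gt0.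
apply: (near_mono (nearI (cg _ e2) (ch _ e2))) => w [hg hh].
rewrite opprD addrACA; apply: le_trans (le_normcD _ _) _; lra.
Qed.

Lemma cont_atB g h c : cont_at g c -> cont_at h c -> cont_at (fun w => g w - h w) c.
Proof.
move=> cg ch e e0; have e2 : 0 < e / 2 by rewrite divr_gt0.
apply: (near_mono (nearI (cg _ e2) (ch _ e2))) => w [hg hh].
have -> : g w - h w - (g c - h c) = (g w - g c) + - (h w - h c) by ring.
by apply: le_trans (le_normcD _ _) _; rewrite normcN; lra.
Qed.

Lemma cont_atMr (a : C) g c : cont_at g c -> cont_at (fun w => g w * a) c.
Proof.
move=> cg e e0; have [t t0 te] := exists_pos_mul_le (normc_ge0 a) e0.
apply: (near_mono (cg _ t0)) => w hg; rewrite -mulrBl normcM.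
by apply: le_trans te; rewrite ler_wpM2r ?normc_ge0.
Qed.

Lemma cont_at_sum (I : Type) (s : seq I) (F : I -> ('I_N -> C) -> C) c :
  (forall i, cont_at (F i) c) -> cont_at (fun w => \sum_(i <- s) F i w) c.
Proof.
move=> cF; elim: s => [|i s ih] e e0.
  by apply: (near_mono (@cont_at_cst 0 c _ e0)) => w; rewrite !big_nil.
by apply: (near_mono (cont_atD (cF i) ih e0)) => w; rewrite !big_cons.
Qed.

Lemma cont_at_bounded g c : cont_at g c -> near c (fun w => normc (g w) <= normc (g c) + 1).
Proof.
move=> cg; apply: (near_mono (cg 1 ltr01)) => w h.
rewrite -[g w](subrK (g c)); apply: le_trans (le_normcD _ _) _; lra.
Qed.

Lemma cont_at_neq0 g c : cont_at g c -> g c != 0 -> near c (fun w => g w != 0).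
Proof.
rewrite -normc_gt0 => cg gc0; have e0 : 0 < normc (g c) / 2 by rewrite divr_gt0.
apply: (near_mono (cg _ e0)) => w h; apply/eqP => gw0.
by move: h; rewrite gw0 sub0r normcN; lra.
Qed.

(* Strict (two-point) differentiability is what makes the Newton map of [newton_zero] a
   contraction. *)
Definition strict_deriv g L c := forall e : R, 0 < e ->
  near2 c (fun w w' => normc (g w - g w' - dotv L (fun k => w k - w' k))
                         <= e * norm1 (fun k => w k - w' k)).

Lemma strict_deriv_ext g g' L L' c : (forall w, g' w = g w) -> (forall k, L' k = L k) ->
  strict_deriv g L c -> strict_deriv g' L' c.
Proof.
move=> gg' LL' sg e e0; apply: (near2_mono (sg e e0)) => w w' h.
by rewrite !gg' /dotv (eq_bigr (fun k => L k * (w k - w' k))) // => k _; rewrite LL'.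
Qed.

Lemma strict_deriv_cont g L c : strict_deriv g L c -> cont_at g c.
Proof.
move=> sg e e0.
have [t t0 te] := exists_pos_mul_le (mulr_ge0 (ler0n _ N) (addr_ge0 (norm1_ge0 L) ler01)) e0.
have [d d0 hd] := sg 1 ltr01.
exists (Num.min d t); first by rewrite lt_min d0.
have [le_d lt_t] : Num.min d t <= d /\ Num.min d t <= t by rewrite !ge_min !lexx ?orbT.
move=> w hw; have hn := norm1_le (cball_le lt_t hw).
have := hd w c (cball_le le_d hw) (cball_center _ (ltW d0)); rewrite mul1r => h.
rewrite -[g w - g c](subrK (dotv L (fun k => w k - c k))).
apply: le_trans (le_normcD _ _) _; apply: le_trans (lerD h (normc_dotv _ _)) _.
apply: le_trans te; rewrite -[X in X + _]mul1r -mulrDl mulrC.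
by rewrite addrC mulrA [t * _]mulrC ler_wpM2r ?addr_ge0 ?norm1_ge0.
Qed.

Lemma strict_deriv_cst (a : C) c : strict_deriv (fun _ => a) (fun _ => 0) c.
Proof.
move=> e e0; exists 1 => // w w' _ _.
by rewrite /dotv big1 => [|k _]; rewrite ?mul0r // !subrr normc0 mulr_ge0 ?norm1_ge0 ?ltW.
Qed.

Lemma strict_deriv_coord i c : strict_deriv (fun w => w i) (fun k => (k == i)%:R) c.
Proof.
move=> e e0; exists 1 => // w w' _ _.
rewrite /dotv (bigD1 i) //= eqxx mul1r big1 => [|k /negbTE->]; last by rewrite mul0r.
by rewrite addr0 subrr normc0 mulr_ge0 ?norm1_ge0 ?ltW.
Qed.

Lemma strict_derivD g h Lg Lh c : strict_deriv g Lg c -> strict_deriv h Lh c ->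
  strict_deriv (fun w => g w + h w) (fun k => Lg k + Lh k) c.
Proof.
move=> sg sh e e0; have e2 : 0 < e / 2 by rewrite divr_gt0.
apply: (near2_mono (near2I (sg _ e2) (sh _ e2))) => w w' [].
rewrite dotvDl; set S := norm1 _; set a := dotv Lg _; set b := dotv Lh _ => hg hh.
have -> : g w + h w - (g w' + h w') - (a + b) = (g w - g w' - a) + (h w - h w' - b) by ring.
by apply: le_trans (le_normcD _ _) _; lra.
Qed.

Lemma strict_derivM g h Lg Lh c : strict_deriv g Lg c -> strict_deriv h Lh c ->
  strict_deriv (fun w => g w * h w) (fun k => Lg k * h c + g c * Lh k) c.
Proof.
move=> sg sh e e0; have e2 : 0 < e / 2 by rewrite divr_gt0.
have cg := strict_deriv_cont sg; have ch := strict_deriv_cont sh.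
pose Bg := normc (g c) + 1; pose Bh := normc (h c) + 1.
have B0 : 0 <= Bg + Bh by rewrite !addr_ge0 ?normc_ge0.
have [t1 t10 ht1] := exists_pos_mul_le B0 e2.
have [t2 t20 ht2] := exists_pos_mul_le (addr_ge0 (norm1_ge0 Lg) (norm1_ge0 Lh)) e2.
have near_gh := near2_near (nearI (nearI (cont_at_bounded cg) (cont_at_bounded ch))
                                  (nearI (cg _ t20) (ch _ t20))).
apply: (near2_mono (near2I (near2I (sg _ t10) (sh _ t10)) near_gh)).
move=> w w' [[Eg Eh] [[[Bgw _] [Cgw _]] [[_ Bhw'] [_ Chw']]]].
rewrite dotvDl dotvZr dotvZl; set S := norm1 _; set a := dotv Lg _; set b := dotv Lh _.
have S0 : 0 <= S := norm1_ge0 _.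
have -> : g w * h w - g w' * h w' - (h c * a + g c * b) =
  g w * (h w - h w' - b) + (g w - g c) * b + h w' * (g w - g w' - a) + (h w' - h c) * a.
  by ring.
have T1 : normc (g w * (h w - h w' - b)) <= Bg * (t1 * S).
  by rewrite normcM ler_pM ?normc_ge0.
have T2 : normc ((g w - g c) * b) <= t2 * (norm1 Lh * S).
  by rewrite normcM ler_pM ?normc_ge0 ?normc_dotv.
have T3 : normc (h w' * (g w - g w' - a)) <= Bh * (t1 * S).
  by rewrite normcM ler_pM ?normc_ge0.
have T4 : normc ((h w' - h c) * a) <= t2 * (norm1 Lg * S).
  by rewrite normcM ler_pM ?normc_ge0 ?normc_dotv.
have c1 : t1 * (Bg + Bh) * S <= e / 2 * S by rewrite ler_wpM2r.
have c2 : t2 * (norm1 Lg + norm1 Lh) * S <= e / 2 * S by rewrite ler_wpM2r.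
apply: le_trans (le_normcD _ _) _; apply: le_trans (lerD (le_normcD _ _) T4) _.
apply: le_trans (lerD (lerD (le_normcD _ _) T3) (lexx _)) _.
apply: le_trans (lerD (lerD (lerD T1 T2) (lexx _)) (lexx _)) _.
nra.
Qed.

End LocalAnalysis.

Lemma cont_at_comp N1 N2 (phi : ('I_N1 -> C) -> 'I_N2 -> C) (g : ('I_N2 -> C) -> C) c :
  (forall d w, 0 < d -> cball c d w -> cball (phi c) d (phi w)) ->
  cont_at g (phi c) -> cont_at (fun w => g (phi w)) c.
Proof. by move=> hphi cg e e0; have [d d0 hd] := cg e e0; exists d => // w /(hphi _ _ d0)/hd. Qed.

Lemma injective_nonzero_near N (a : 'I_N -> C) : (forall i, a i != 0) -> injective a ->
  near a (fun a' => (forall i, a' i != 0) /\ injective a').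
Proof.
move=> a0 ainj.
have nz := near_forall (fun i => cont_at_neq0 (cont_at_coord i a) (a0 i)).
have dist : near a (fun a' => forall ij : 'I_N * 'I_N, ij.1 != ij.2 -> a' ij.1 - a' ij.2 != 0).
  apply: near_forall => -[i j] /=; have [->|ij] := eqVneq i j.
    by apply: (near_mono (near_cball a ltr01)) => w _ /=.
  have c := cont_atB (cont_at_coord i a) (cont_at_coord j a).
  apply: (near_mono (cont_at_neq0 c _)) => //; rewrite subr_eq0.
  by apply: contraTneq ij => /ainj ->; rewrite eqxx.
apply: (near_mono (nearI nz dist)) => w [wnz wd]; split => // i j wij.
by case: (eqVneq i j) => // ij; have := wd (i, j) ij; rewrite /= wij subrr eqxx; case.
Qed.

(** * Polynomial maps *)

(* [evalC p w] is [ev w p] by conversion. *)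
Definition ev N (w : 'I_N -> C) : {mpoly int[N]} -> C := meval w \o map_mpoly (intmul 1).
HB.instance Definition _ N w := GRing.RMorphism.on (@ev N w).
Arguments ev {N} w _.

Lemma evE N (w : 'I_N -> C) p : ev w p = meval w (map_mpoly (intmul 1) p).
Proof. by []. Qed.

Lemma evD N (w : 'I_N -> C) : {morph ev w : p q / p + q}.
Proof. exact: rmorphD. Qed.

Lemma evM N (w : 'I_N -> C) : {morph ev w : p q / p * q}.
Proof. exact: rmorphM. Qed.

Section PolynomialRegularity.
Variable N : nat.
Implicit Types (p q : {mpoly int[N]}) (c : 'I_N -> C).

Definition ev_regular p := forall c, strict_deriv (ev^~ p) (fun k => ev c p^`M(k)) c.

Lemma ev_regularD p q : ev_regular p -> ev_regular q -> ev_regular (p + q).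
Proof.
move=> rp rq c; apply: strict_deriv_ext (strict_derivD (rp c) (rq c)) => [w|k].
  exact: evD.
by rewrite mderivD evD.
Qed.

Lemma ev_regularM p q : ev_regular p -> ev_regular q -> ev_regular (p * q).
Proof.
move=> rp rq c; apply: strict_deriv_ext (strict_derivM (rp c) (rq c)) => [w|k].
  exact: evM.
by rewrite mderivM evD !evM.
Qed.

Lemma ev_regularC (a : int) : ev_regular a%:MP.
Proof.
move=> c; apply: strict_deriv_ext (strict_deriv_cst a%:~R c) => [w|k].
  by rewrite evE map_mpolyC mevalC.
by rewrite mderivC (rmorph0 (ev c)).
Qed.

Lemma ev_regularX (i : 'I_N) : ev_regular 'X_i.
Proof.
move=> c; apply: strict_deriv_ext (strict_deriv_coord i c) => [w|k].
  by rewrite evE map_mpolyX mevalXU.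
rewrite mderivX mnm1E eq_sym; case: eqP => [->|_]; last by rewrite scale0r (rmorph0 (ev c)).
have -> : (U_(i) - U_(i))%MM = 0%MM :> 'X_{1..N}.
  by apply/mnmP => j; rewrite mnmBE mnm0E subnn.
by rewrite scale1r mpolyX0 (rmorph1 (ev c)).
Qed.

Lemma ev_regular_all p : ev_regular p.
Proof.
have r0 : ev_regular 0 by rewrite -mpolyC0; exact: ev_regularC.
have r1 : ev_regular 1 by rewrite -mpolyC1; exact: ev_regularC.
rewrite (mpolyE p); apply: (big_ind ev_regular r0 ev_regularD) => m _.
rewrite -mul_mpolyC mpolyXE_id; apply: ev_regularM; first exact: ev_regularC.
apply: (big_ind ev_regular r1 ev_regularM) => i _.
elim: (m i) => [|k ih]; first by rewrite expr0.
by rewrite exprS; apply: ev_regularM (ev_regularX i) ih.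
Qed.

Lemma cont_at_ev p c : cont_at (ev^~ p) c.
Proof. exact: strict_deriv_cont (ev_regular_all p c). Qed.

End PolynomialRegularity.

(** * A quantitative implicit function theorem *)

(* Under this alias the complete normed module structure of row vectors is found by
   [banach_fixed_point]. *)
Definition rvec (K : realType) m := 'rV[K]_m.
HB.instance Definition _ (K : realType) m := NormedModule.on (rvec K m).
HB.instance Definition _ (K : realType) m := Complete.on (rvec K m).

Lemma rvec_coord_le m (x : rvec R m) j : `|x ord0 j| <= `|x|.
Proof.
rewrite [`|x|]mx_normrE.
exact: (le_bigmax _ (fun ij : 'I_1 * 'I_m => `|x ij.1 ij.2|) (ord0, j)).
Qed.

Lemma rvec_norm_le m (x : rvec R m) t : 0 <= t -> (forall j, `|x ord0 j| <= t) -> `|x| <= t.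
Proof.
move=> t0 h; rewrite [`|x|]mx_normrE; apply: bigmax_le => // -[i j] _ /=.
by rewrite (ord1 i).
Qed.

Section Realification.
Variable n : nat.
Local Notation V := (rvec R (n + n)).

Definition realify (u : 'I_n -> C) : V :=
  \row_j match fintype.split j with inl k => complex.Re (u k) | inr k => complex.Im (u k) end.

Definition complexify (x : V) : 'I_n -> C :=
  fun k => (x ord0 (lshift n k) +i* x ord0 (rshift n k))%C.

Lemma realifyK : cancel realify complexify.
Proof.
move=> u; apply: funext => k; rewrite /complexify !mxE.
rewrite -[lshift n k]/(unsplit (inl k)) -[rshift n k]/(unsplit (inr k)) !unsplitK.
by case: (u k).
Qed.

Lemma normc_complexifyB (x y : V) k :
  normc (complexify x k - complexify y k) <= 2 * `|x - y|.
Proof.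
have -> : complexify x k - complexify y k =
    ((x - y) ord0 (lshift n k) +i* (x - y) ord0 (rshift n k))%C by rewrite /complexify !mxE.
apply: le_trans (normc_complex_le _ _) _.
have := rvec_coord_le (x - y) (lshift n k); have := rvec_coord_le (x - y) (rshift n k).
lra.
Qed.

Lemma norm_realifyB (u v : 'I_n -> C) t : 0 <= t -> (forall k, normc (u k - v k) <= t) ->
  `|realify u - realify v| <= t.
Proof.
move=> t0 h; apply: rvec_norm_le => // j; rewrite !mxE.
case: (fintype.split j) => k; apply: le_trans (h k); case: (u k) (v k) => a b [c d].
  exact: (normc_Re ((a +i* b) - (c +i* d))%C).
exact: (normc_Im ((a +i* b) - (c +i* d))%C).
Qed.

End Realification.

Arguments realify {n} u.
Arguments complexify {n} x _.

(* The sup norms of R^(2n) and C^n differ at most by a factor 2, hence the radii. *)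
Lemma cball_fixed_point n (Phi : ('I_n -> C) -> 'I_n -> C) (u0 : 'I_n -> C) (rho q : R) :
  0 < rho -> 0 <= q -> q * (2 * n%:R) < 1 ->
  (forall u, cball u0 rho u -> cball u0 (rho / 2) (Phi u)) ->
  (forall u u', cball u0 rho u -> cball u0 rho u' -> forall k,
     normc (Phi u k - Phi u' k) <= q * norm1 (fun j => u j - u' j)) ->
  exists2 u, cball u0 rho u & Phi u = u.
Proof.
move=> rho0 q0 q1 maps lip.
pose U : set (rvec R (n + n)) := fun x => `|realify u0 - x| <= rho / 2.
have UC x : U x -> cball u0 rho (complexify x).
  move=> Ux k; rewrite -[u0 k]/(id u0 k) -{1}(realifyK u0) normc_distC /=.
  by apply: le_trans (normc_complexifyB _ _ _) _; move: Ux; rewrite /U; lra.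
pose phi x := realify (Phi (complexify x)).
have phiU x : U x -> U (phi x).
  move=> /UC /maps Px; apply: norm_realifyB => [|k]; first by rewrite divr_ge0 ?ltW.
  by rewrite normc_distC.
have contr x y : U x -> U y -> `|phi x - phi y| <= q * (2 * n%:R) * `|x - y|.
  move=> Ux Uy; apply: norm_realifyB => [|k]; first by rewrite !mulr_ge0.
  apply: le_trans (lip _ _ (UC x Ux) (UC y Uy) k) _.
  have := norm1_le (normc_complexifyB x y); have := normr_ge0 (x - y); nra.
pose F : {fun U >-> U} := HB.pack_for {fun U >-> U} phi (isFun.Build _ _ U U phi phiU).
have ctr : is_contraction F.
  exists (NngNum (mulr_ge0 q0 (mulr_ge0 (ler0n _ 2) (ler0n _ n)))); split => //.
  by move=> [x y] /= [Ux Uy]; exact: contr.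
have clU : closed U by exact: closed_closed_ball_.
have neU : (U !=set0)%classic.
  by exists (realify u0); rewrite /U subrr normr0 divr_ge0 ?ltW.
have [p Up fp] := banach_fixed_point ctr clU neU.
exists (complexify p); first exact: UC.
by have := congr1 complexify fp; rewrite /= /phi realifyK => <-.
Qed.

Lemma dotv_mulmx n (M B : 'M[C]_n) (y : 'I_n -> C) k :
  dotv (M k) (fun j => dotv (B j) y) = dotv ((M *m B) k) y.
Proof.
rewrite /dotv; under eq_bigr do rewrite mulr_sumr.
rewrite exchange_big; apply: eq_bigr => l _ /=; rewrite mxE mulr_suml.
by apply: eq_bigr => j _; rewrite mulrA.
Qed.

Lemma dotv1 n (y : 'I_n -> C) k : dotv ((1%:M : 'M[C]_n) k) y = y k.
Proof.
rewrite /dotv (bigD1 k) //= mxE eqxx mul1r big1 ?addr0 // => j.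
by rewrite mxE eq_sym => /negbTE ->; rewrite mul0r.
Qed.

Definition mxnorm1 n (M : 'M[C]_n) : R := \sum_k norm1 (M k).

Lemma mxnorm1_ge0 n (M : 'M[C]_n) : 0 <= mxnorm1 M.
Proof. by apply: sumr_ge0 => k _; exact: norm1_ge0. Qed.

Lemma normc_dotv_row n (M : 'M[C]_n) k y : normc (dotv (M k) y) <= mxnorm1 M * norm1 y.
Proof.
apply: le_trans (normc_dotv _ _) _; rewrite ler_wpM2r ?norm1_ge0 //.
by rewrite /mxnorm1 (bigD1 k) //= lerDl sumr_ge0 // => j _; exact: norm1_ge0.
Qed.

Section ImplicitZero.
Variables (n P : nat) (G : ('I_n -> C) -> ('I_P -> C) -> 'I_n -> C) (A : 'M[C]_n).
Variables (u0 : 'I_n -> C) (w0 : 'I_P -> C).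
Hypothesis A_unit : A \in unitmx.

Definition newton w u : 'I_n -> C := fun k => u k - dotv (invmx A k) (fun j => G u w j).

Lemma newtonB w u u' k : newton w u k - newton w u' k =
  - dotv (invmx A k) (fun j => G u w j - G u' w j - dotv (A j) (fun l => u l - u' l)).
Proof.
have := dotv_mulmx (invmx A) A (fun l => u l - u' l) k; rewrite mulVmx // dotv1 => E.
by rewrite !dotvBr E /newton; ring.
Qed.

Lemma newton_fixed w u : newton w u = u -> forall k, G u w k = 0.
Proof.
move=> fu k; have h j : dotv (invmx A j) (fun l => G u w l) = 0.
  have := congr1 (fun v => v j - u j) fu; rewrite /newton /= addrAC subrr add0r.
  by move/eqP; rewrite oppr_eq0 => /eqP.
rewrite -[G u w k](dotv1 (fun l => G u w l)) -(mulmxV A_unit) -dotv_mulmx.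
by apply: big1 => j _; rewrite h mulr0.
Qed.

Lemma newton_zero w (e rho t : R) : 0 < rho -> 0 <= e ->
  (forall u u', cball u0 rho u -> cball u0 rho u' -> forall k,
     normc (G u w k - G u' w k - dotv (A k) (fun j => u j - u' j))
       <= e * norm1 (fun j => u j - u' j)) ->
  (forall k, normc (G u0 w k) <= t) ->
  mxnorm1 (invmx A) * (n%:R * e) * (2 * n%:R) <= 1 / 2 ->
  mxnorm1 (invmx A) * (n%:R * t) <= rho / 4 ->
  exists2 u, cball u0 rho u & forall k, G u w k = 0.
Proof.
set q := mxnorm1 (invmx A) * (n%:R * e) => rho0 e0 hG hG0 small_e small_t.
have q0 : 0 <= q by rewrite !mulr_ge0 ?mxnorm1_ge0.
have lip u u' : cball u0 rho u -> cball u0 rho u' -> forall k,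
    normc (newton w u k - newton w u' k) <= q * norm1 (fun j => u j - u' j).
  move=> hu hu' k; rewrite newtonB normcN; apply: le_trans (normc_dotv_row _ _ _) _.
  by rewrite -!mulrA ler_wpM2l ?mxnorm1_ge0 //; apply: norm1_le => j; exact: hG.
have maps u : cball u0 rho u -> cball u0 (rho / 2) (newton w u).
  move=> hu k; rewrite -(subrK (newton w u0 k) (newton w u k)) -addrA.
  apply: le_trans (le_normcD _ _) _.
  have b1 : normc (newton w u k - newton w u0 k) <= rho / 4.
    apply: le_trans (lip _ _ hu (cball_center _ (ltW rho0)) k) _.
    have := ler_wpM2l q0 (norm1_le hu); nra.
  have b2 : normc (newton w u0 k - u0 k) <= rho / 4.
    rewrite /newton addrAC subrr add0r normcN; apply: le_trans (normc_dotv_row _ _ _) _.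
    by apply: le_trans small_t; rewrite ler_wpM2l ?mxnorm1_ge0 // norm1_le.
  lra.
have [|u hu fu] := cball_fixed_point rho0 q0 _ maps lip; first lra.
by exists u => //; exact: newton_fixed.
Qed.

Hypothesis G_strict : forall e : R, 0 < e -> exists2 d : R, 0 < d &
  forall w u u', cball w0 d w -> cball u0 d u -> cball u0 d u' -> forall k,
    normc (G u w k - G u' w k - dotv (A k) (fun j => u j - u' j))
      <= e * norm1 (fun j => u j - u' j).
Hypothesis G_cont : forall k, cont_at (fun w => G u0 w k) w0.
Hypothesis G_zero : forall k, G u0 w0 k = 0.

Lemma implicit_zero eta : 0 < eta ->
  near w0 (fun w => exists2 u, cball u0 eta u & forall k, G u w k = 0).
Proof.
move=> eta0; set K := mxnorm1 (invmx A); pose nn : R := n%:R.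
have Knn0 : 0 <= K * nn by rewrite mulr_ge0 ?mxnorm1_ge0.
have half0 : (0 : R) < 1 / 2 by rewrite divr_gt0.
have [e e0 he] := exists_pos_mul_le (mulr_ge0 Knn0 (mulr_ge0 (ler0n _ 2) (ler0n _ n))) half0.
have [d d0 hd] := G_strict e0.
pose rho := Num.min d eta.
have rho0 : 0 < rho by rewrite lt_min d0.
have [rho_d rho_eta] : rho <= d /\ rho <= eta by rewrite !ge_min !lexx ?orbT.
have quarter0 : 0 < rho / 4 by rewrite divr_gt0.
have [t t0 ht] := exists_pos_mul_le Knn0 quarter0.
have small_e : K * (nn * e) * (2 * nn) <= 1 / 2.
  by have -> : K * (nn * e) * (2 * nn) = e * (K * nn * (2 * nn)) by ring.
have small_t : K * (nn * t) <= rho / 4 by rewrite mulrA mulrC.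
have small : near w0 (fun w => forall k, normc (G u0 w k) <= t).
  apply: (near_mono (near_forall (fun k => G_cont k t0))) => w h k.
  by rewrite -[G u0 w k]subr0 -(G_zero k).
apply: (near_mono (nearI (near_cball w0 d0) small)) => w [wd wt].
have [|u hu zu] := newton_zero rho0 (ltW e0) _ wt small_e small_t.
  by move=> u u' hu hu'; apply: hd (cball_le rho_d hu) (cball_le rho_d hu').
by exists u; first exact: cball_le hu.
Qed.

End ImplicitZero.

(** * Balanced zeros *)

Section BalancedZeros.
Variables (n r : nat) (f : 'I_n -> {mpoly int[n + n + r]}).
Local Notation N := (n + n + r).
Implicit Types (I : {set 'I_n}) (a b u : 'I_n -> C) (z : 'I_r -> C) (w : 'I_N -> C).

Lemma pt_x a b z i : pt a b z (xvar r i) = a i.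
Proof.
by rewrite /pt /xvar -[lshift r _]/(unsplit (inl _)) unsplitK
  -[lshift n i]/(unsplit (inl _)) unsplitK.
Qed.

Lemma pt_y a b z j : pt a b z (yvar r j) = b j.
Proof.
by rewrite /pt /yvar -[lshift r _]/(unsplit (inl _)) unsplitK
  -[rshift n j]/(unsplit (inr _)) unsplitK.
Qed.

Lemma pt_z a b z l : pt a b z (rshift (n + n) l) = z l.
Proof. by rewrite /pt -[rshift _ l]/(unsplit (inr _)) unsplitK. Qed.

Definition jcol I j : 'I_(n + n) := if j \in I then lshift n j else rshift n j.

Definition jvar I j : 'I_N := lshift r (jcol I j).

Definition Dpoly : 'M[{mpoly int[N]}]_(n, n + n) := \matrix_(k, m) (f k)^`M(lshift r m).

Definition selmx I : 'M[{mpoly int[N]}]_(n + n, n) := \matrix_(m, j) (m == jcol I j)%:R.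

Definition jacpoly I := Dpoly *m selmx I.

Lemma jacpolyE I k j : jacpoly I k j = (f k)^`M(jvar I j).
Proof.
rewrite !mxE (bigD1 (jcol I j)) //= !mxE eqxx mulr1 big1 ?addr0 // => m /negbTE mj.
by rewrite !mxE mj mulr0.
Qed.

Lemma balanced_jacobianE I w :
  \matrix_(k < n, j < n) dpoly (f k) (if j \in I then xvar r j else yvar r j) w
  = map_mx (ev w) (jacpoly I).
Proof.
apply/matrixP => k j; rewrite [RHS]mxE jacpolyE mxE /jvar /jcol.
by case: (j \in I).
Qed.

Lemma jacobian_unit_near I w0 : map_mx (ev w0) (jacpoly I) \in unitmx ->
  near w0 (fun w => map_mx (ev w) (jacpoly I) \in unitmx).
Proof.
rewrite unitmxE unitfE det_map_mx => J0.
apply: (near_mono (cont_at_neq0 (cont_at_ev _ w0) J0)) => w.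
by rewrite unitmxE unitfE det_map_mx.
Qed.

Definition in_kerD w (v : 'I_(n + n) -> C) :=
  forall k, \sum_m ev w (f k)^`M(lshift r m) * v m = 0.

Lemma in_kerD_mx w v : in_kerD w v <-> map_mx (ev w) Dpoly *m \col_m v m = 0.
Proof.
have E k : (map_mx (ev w) Dpoly *m \col_m v m) k 0 = \sum_m ev w (f k)^`M(lshift r m) * v m.
  by rewrite mxE; apply: eq_bigr => m _; rewrite !mxE.
split => [h|/matrixP h k]; last by rewrite -E h mxE.
by apply/matrixP => k i; rewrite (ord1 i) E h mxE.
Qed.

Definition kerpoly I : 'M[{mpoly int[N]}]_(n + n) :=
  \det (jacpoly I) *: 1%:M - selmx I *m (\adj (jacpoly I) *m Dpoly).

Lemma Dpoly_kerpoly I : Dpoly *m kerpoly I = 0.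
Proof.
rewrite mulmxBr -scalemxAr mulmx1 !mulmxA -[Dpoly *m selmx I]/(jacpoly I).
by rewrite mul_mx_adj mul_scalar_mx subrr.
Qed.

Lemma kernel_near I w0 v m0 : map_mx (ev w0) (jacpoly I) \in unitmx ->
  in_kerD w0 v -> v m0 != 0 ->
  near w0 (fun w => exists v', in_kerD w v' /\ v' m0 != 0).
Proof.
move=> J0 /in_kerD_mx Dv vm0.
pose vw w m := \sum_l ev w (kerpoly I m l) * v l.
have colE w : \col_m vw w m = map_mx (ev w) (kerpoly I) *m \col_m v m.
  by apply/matrixP => m i; rewrite (ord1 i) !mxE; apply: eq_bigr => l _; rewrite !mxE.
have vw_ker w : in_kerD w (vw w).
  by apply/in_kerD_mx; rewrite colE mulmxA -map_mxM Dpoly_kerpoly map_mx0 mul0mx.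
have vw0 : vw w0 m0 = \det (map_mx (ev w0) (jacpoly I)) * v m0.
  have -> : vw w0 m0 = (map_mx (ev w0) (kerpoly I) *m \col_m v m) m0 0 by rewrite -colE mxE.
  rewrite map_mxB map_mxZ map_mx1 !map_mxM map_mx_adj mulmxBl -!mulmxA Dv !mulmx0 subr0.
  by rewrite -scalemxAl mul1mx !mxE -det_map_mx map_mxM.
have cont : cont_at (fun w => vw w m0) w0.
  by apply: cont_at_sum => l; apply: cont_atMr; exact: cont_at_ev.
have vw0_ne : vw w0 m0 != 0 by rewrite vw0 mulf_neq0 // -unitfE -unitmxE.
by apply: (near_mono (cont_at_neq0 cont vw0_ne)) => w; exists (vw w).
Qed.

Definition xsub I a u i := if i \in I then u i else a i.
Definition ysub I b u j := if j \in I then b j else u j.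
Definition free_coords I a b j := if j \in I then a j else b j.
Definition lift_pt I a b z u : 'I_N -> C := pt (xsub I a u) (ysub I b u) z.

Lemma lift_pt_free I a b z : lift_pt I a b z (free_coords I a b) = pt a b z.
Proof.
by congr pt; apply: funext => i; rewrite /xsub /ysub /free_coords; case: (i \in I).
Qed.

Lemma lift_ptB (T : zmodType) (Phi : 'I_N -> C -> T) I a b z u u' :
  (forall m, Phi m 0 = 0) ->
  \sum_m Phi m (lift_pt I a b z u m - lift_pt I a b z u' m) = \sum_j Phi (jvar I j) (u j - u' j).
Proof.
move=> Phi0; rewrite /lift_pt big_split_ord /= big_split_ord /=.
rewrite [X in _ + X]big1 => [|l _]; last by rewrite !pt_z subrr Phi0.
rewrite addr0 -big_split; apply: eq_bigr => j _ /=.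
rewrite -[lshift r (lshift n j)]/(xvar r j) -[lshift r (rshift n j)]/(yvar r j).
rewrite !pt_x !pt_y /xsub /ysub /jvar /jcol; case: (j \in I); rewrite subrr Phi0.
  exact: addr0.
exact: add0r.
Qed.

Lemma cball_lift_pt I a b z0 z u (d : R) : 0 <= d ->
  cball (free_coords I a b) d u -> cball z0 d z -> cball (pt a b z0) d (lift_pt I a b z u).
Proof.
move=> d0 hu hz m; rewrite /lift_pt -(splitK m).
case: (fintype.split m) => [m1|l] /=; last first.
  by rewrite -[rshift _ l]/(unsplit (inr _)) !pt_z; exact: hz.
have := hu; rewrite -(splitK m1); case: (fintype.split m1) => [i|j] /= {}hu.
  rewrite -[lshift r (lshift n i)]/(xvar r i) !pt_x /xsub.
  by have := hu i; rewrite /free_coords; case: (i \in I) => // _; rewrite subrr normc0.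
rewrite -[lshift r (rshift n j)]/(yvar r j) !pt_y /ysub.
by have := hu j; rewrite /free_coords; case: (j \in I) => // _; rewrite subrr normc0.
Qed.

Lemma zeros_near I a b z0 : (forall k, ev (pt a b z0) (f k) = 0) ->
  map_mx (ev (pt a b z0)) (jacpoly I) \in unitmx ->
  forall eta, 0 < eta -> near z0 (fun z =>
    exists2 u, cball (free_coords I a b) eta u & forall k, ev (lift_pt I a b z u) (f k) = 0).
Proof.
move=> hz J0 eta eta0; set w0 := pt a b z0.
apply: (implicit_zero (G := fun u z k => ev (lift_pt I a b z u) (f k)) J0) => // [e e0|k|k].
- have [d d0 hd] := near2_forall (fun k => ev_regular_all (f k) w0 e0).
  exists d => // z u u' hz' hu hu' k.
  have := hd _ _ (cball_lift_pt (ltW d0) hu hz') (cball_lift_pt (ltW d0) hu' hz') k.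
  rewrite /dotv /norm1 (lift_ptB (Phi := fun m x => ev w0 (f k)^`M(m) * x)) => [|m];
    last by rewrite mulr0.
  rewrite (lift_ptB (Phi := fun _ x => normc x)) => [|m]; last exact: normc0.
  congr (normc (_ - _) <= _); apply: eq_bigr => j _; by rewrite mxE jacpolyE.
- pose phi z := lift_pt I a b z (free_coords I a b).
  apply: (@cont_at_comp _ _ phi (ev^~ (f k))) => [d z d0 hz'|].
    by rewrite /phi lift_pt_free; apply: cball_lift_pt (ltW d0) (cball_center _ (ltW d0)) hz'.
  exact: cont_at_ev.
- by rewrite lift_pt_free.
Qed.

Lemma balanced_zero_near z0 a b (Q : ('I_N -> C) -> Prop) :
  balanced_zero f z0 a b -> near (pt a b z0) Q ->
  near z0 (fun z => exists a' b', balanced_zero f z a' b' /\ Q (pt a' b' z)).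
Proof.
case=> hz a0 ainj [I]; rewrite balanced_jacobianE => J0 hQ.
have [dw dw0 hw] := nearI (jacobian_unit_near J0) hQ.
have [da da0 hda] := injective_nonzero_near a0 ainj.
pose eta := Num.min dw da.
have eta0 : 0 < eta by rewrite lt_min dw0.
have [eta_dw eta_da] : eta <= dw /\ eta <= da by rewrite !ge_min !lexx ?orbT.
apply: (near_mono (nearI (zeros_near hz J0 eta0) (near_cball z0 eta0))) => z [[u hu u0] hz'].
have hpt := cball_lift_pt (ltW eta0) hu hz'.
have [J Q'] := hw _ (cball_le eta_dw hpt).
have [a'0 a'inj] : (forall i, xsub I a u i != 0) /\ injective (xsub I a u).
  by apply: hda => i; have := hpt (xvar r i); rewrite /lift_pt !pt_x => /le_trans; apply.
exists (xsub I a u), (ysub I b u); split => //; split => //.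
by exists I; rewrite balanced_jacobianE.
Qed.

Lemma well_balanced_of_kernel z a b : balanced_zero f z a b ->
  (forall i, exists v, in_kerD (pt a b z) v /\ v (lshift n i) != 0) ->
  well_balanced_zero f z a b.
Proof.
move=> bz hk; split => // -[i [c hc]]; have [v [kv vi]] := hk i.
have k0 : in_kerD (pt a b z) (fun _ => 0) by move=> k; rewrite big1 // => m _; rewrite mulr0.
have : a i + v (lshift n i) = a i + 0 by rewrite (hc _ kv) (hc _ k0).
by move/addrI => v0; rewrite v0 eqxx in vi.
Qed.

Lemma kernel_of_well_balanced z a b : well_balanced_zero f z a b ->
  forall i, exists v, in_kerD (pt a b z) v /\ v (lshift n i) != 0.
Proof.
case=> _ nk i; apply: contrapT => hne; apply: nk; exists i, (a i) => v kv.
have [->|vi] := eqVneq (v (lshift n i)) 0; first by rewrite addr0.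
by case: hne; exists v.
Qed.

End BalancedZeros.

Lemma open_Cr_near r (S : ('I_r -> C) -> Prop) : (forall z, S z -> near z S) -> open_Cr S.
Proof.
move=> hS z /hS [d d0 hd]; exists d; split => // z' hz'; apply: hd => l.
by apply/ltW; rewrite -ltc_normc.
Qed.

Theorem proposition1 (n r : nat) (f : 'I_n -> {mpoly int[n + n + r]}) :
  open_Cr (fun z : 'I_r -> C => exists a b : 'I_n -> C, balanced_zero f z a b) /\
  open_Cr (fun z : 'I_r -> C => exists a b : 'I_n -> C, well_balanced_zero f z a b).
Proof.
split; apply: open_Cr_near => z0 [a [b h]].
  apply: (near_mono (balanced_zero_near h (near_cball _ ltr01))) => z [a' [b' [bz _]]].
  by exists a', b'.
have [bz _] := h; have [_ _ _ [I]] := bz; rewrite balanced_jacobianE => J0.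
have hK : near (pt a b z0) (fun w => forall i, exists v, in_kerD f w v /\ v (lshift n i) != 0).
  apply: near_forall => i; have [v [kv vi]] := kernel_of_well_balanced h i.
  exact: kernel_near J0 kv vi.
apply: (near_mono (balanced_zero_near bz hK)) => z [a' [b' [bz' hk]]].
by exists a', b'; apply: well_balanced_of_kernel.
Qed.
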